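(* Assume $P_{XY}\in\mathcal{H}_{XY}$. Let $\Omega_u=\{\omega_1<\dots<\omega_{|\mathcal{X}|}\}\subset\{1,\dots,|\mathcal{Y}|\}$ with $M_{\Omega_u}$ invertible, and let $J_u\in\mathbb{R}^{|\mathcal{X}|}$ with $\sum_xJ_u(x)=0$ and $\sum_x|J_u(x)|\le1$. For $\epsilon>0$ let $V^*_{\Omega_u}\in\mathbb{R}^{|\mathcal{Y}|}$ be defined by $V^*_{\Omega_u}(\omega_i)=\left(M_{\Omega_u}^{-1}MP_Y+\epsilon M_{\Omega_u}^{-1}M\begin{bmatrix}P_{X|Y_1}^{-1}J_u\\0\end{bmatrix}\right)(i)$ for $1\le i\le|\mathcal{X}|$ and $V^*_{\Omega_u}(j)=0$ for $j\notin\Omega_u$, and suppose $V^*_{\Omega_u}$ is an extreme point of $\mathbb{S}_u$ for all sufficiently small $\epsilon>0$. Then, for $P_{Y|U=u}=V^*_{\Omega_u}$, as $\epsilon\to0^+$, $$H(P_{Y|U=u})=-\sum_{y=1}^{|\mathcal{Y}|}P_{Y|U=u}(y)\log P_{Y|U=u}(y)=-(b_u+\epsilon a_uJ_u)+o(\epsilon),$$ where $l_u=\left[\log\left((M_{\Omega_u}^{-1}MP_Y)(i)\right)\right]_{i=1,\dots,|\mathcal{X}|}\in\mathbb{R}^{1\times|\mathcal{X}|}$, $b_u=l_u\left(M_{\Omega_u}^{-1}MP_Y\right)$, and $a_u=l_u\left(M_{\Omega_u}^{-1}M(1\!:\!|\mathcal{X}|)P_{X|Y_1}^{-1}\right)\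in\mathbb{R}^{1\times|\mathcal{X}|}$.
   Context: Setting: $X,Y$ on finite alphabets with $|\mathcal{X}|<|\mathcal{Y}|$, joint pmf $P_{XY}$, marginal vectors $P_X,P_Y$ with positive entries. $P_{X|Y}\in\mathbb{R}^{|\mathcal{X}|\times|\mathcal{Y}|}$ has full row rank and $P_{X|Y}=[P_{X|Y_1},P_{X|Y_2}]$ with $P_{X|Y_1}$ (first $|\mathcal{X}|$ columns) invertible. With an SVD $P_{X|Y}=U\Sigma V^T$, $V=[v_1,\dots,v_{|\mathcal{Y}|}]$, set $M=[v_1,\dots,v_{|\mathcal{X}|}]^T$; $M_\Omega$ is the submatrix of $M$ with columns indexed by $\Omega$ and $M(1\!:\!|\mathcal{X}|)$ the submatrix of its first $|\mathcal{X}|$ columns. The zero block has size $|\mathcal{Y}|-|\mathcal{X}|$. $\mathbb{S}_u=\{y\in\mathbb{R}^{|\mathcal{Y}|}: My=MP_Y+\epsilon M\begin{bmatrix}P_{X|Y_1}^{-1}J_u\\0\end{bmatrix},\ y\ge0\}$. $\mathcal{H}_{XY}$ is the set of joint distributions $P_{XY}$ such that for every $\Omega\subset\{1,\dots,|\mathcal{Y}|\}$ with $|\Omega|=|\mathcal{X}|$ and $M_\Omega$ invertible, if $t_\Omega=M_\Omega^{-1}MP_Y$ lies in the probability simplex $\{x\in\mathbb{R}^{|\mathcal{X}|}_{\ge0}:\mathbf{1}^Tx=1\}$ then all entries of $t_\Omega$ are strictly positive. Convention $0\log0=0$. *)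

From HB Require Import structures.
From mathcomp Require Import all_boot all_order all_algebra.
From mathcomp Require Import reals exp.
Set Implicit Arguments. Unset Strict Implicit. Unset Printing Implicit Defensive.
Import Order.TTheory GRing.Theory Num.Theory.
Local Open Scope ring_scope.

Section Defs.
Variable R : realType.

Definition xlogx (x : R) : R := if x == 0 then 0 else x * ln x.

Definition entropy m (p : 'cV[R]_m) : R := - \sum_(j < m) xlogx (p j 0).

Definition marginalY n m (PXY : 'M[R]_(n, m)) : 'cV[R]_m :=
  \col_j \sum_(i < n) PXY i j.
Definition marginalX n m (PXY : 'M[R]_(n, m)) : 'cV[R]_n :=
  \col_i \sum_(j < m) PXY i j.
Definition condXY n m (PXY : 'M[R]_(n, m)) : 'M[R]_(n, m) :=
  \matrix_(i, j) (PXY i j / marginalY PXY j 0).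

Definition is_joint_pmf n m (PXY : 'M[R]_(n, m)) : Prop :=
  (forall i j, 0 <= PXY i j) /\ \sum_(i < n) \sum_(j < m) PXY i j = 1.

Definition is_svd n m (A : 'M[R]_(n, m)) (U : 'M[R]_n) (S : 'M[R]_(n, m))
  (V : 'M[R]_m) : Prop :=
  U^T *m U = 1%:M /\ V^T *m V = 1%:M /\
  (forall (i : 'I_n) (j : 'I_m), (i : nat) <> (j : nat) -> S i j = 0) /\
  (forall (i : 'I_n) (j : 'I_m), (i : nat) = (j : nat) -> 0 <= S i j) /\
  A = U *m S *m V^T.

(* M = [v_1, ..., v_n]^T : the first n columns of V, transposed. *)
Definition Mmat n k (V : 'M[R]_(n + k)) : 'M[R]_(n, n + k) :=
  \matrix_(i < n, j < n + k) V j (lshift k i).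

(* An index set Omega = {w_1 < ... < w_n} given by a strictly increasing map. *)
Definition strictly_incr n m (w : 'I_n -> 'I_m) : Prop :=
  forall i j : 'I_n, (i < j)%N -> (w i < w j)%N.

Definition Msub n m (M : 'M[R]_(n, m)) (w : 'I_n -> 'I_m) : 'M[R]_n :=
  colsub w M.

Definition in_simplex n (t : 'cV[R]_n) : Prop :=
  (forall i, 0 <= t i 0) /\ \sum_(i < n) t i 0 = 1.

Definition in_HXY n m (M : 'M[R]_(n, m)) (PY : 'cV[R]_m) : Prop :=
  forall w : 'I_n -> 'I_m, strictly_incr w -> Msub M w \in unitmx ->
    in_simplex (invmx (Msub M w) *m M *m PY) ->
    forall i, 0 < (invmx (Msub M w) *m M *m PY) i 0.

Definition S_u n k (M : 'M[R]_(n, n + k)) (PY : 'cV[R]_(n + k))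
  (P1 : 'M[R]_n) (J : 'cV[R]_n) (eps : R) (y : 'cV[R]_(n + k)) : Prop :=
  M *m y = M *m PY + eps *: (M *m col_mx (invmx P1 *m J) (0 : 'cV[R]_k)) /\
  forall j, 0 <= y j 0.

Definition extreme_point m (S : 'cV[R]_m -> Prop) (x : 'cV[R]_m) : Prop :=
  S x /\ forall y z, S y -> S z -> forall lam : R, 0 < lam < 1 ->
    x = lam *: y + (1 - lam) *: z -> y = z.

(* The vector supported on Omega with prescribed values on Omega:
   v(w_i) = c(i), v(j) = 0 for j not in Omega. *)
Definition spread n m (w : 'I_n -> 'I_m) (c : 'cV[R]_n) : 'cV[R]_m :=
  \col_j \sum_(i < n | w i == j) c i 0.

Definition Vstar n k (M : 'M[R]_(n, n + k)) (PY : 'cV[R]_(n + k))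
  (P1 : 'M[R]_n) (J : 'cV[R]_n) (w : 'I_n -> 'I_(n + k)) (eps : R)
  : 'cV[R]_(n + k) :=
  spread w (invmx (Msub M w) *m M *m PY
            + eps *: (invmx (Msub M w) *m M *m col_mx (invmx P1 *m J) (0 : 'cV[R]_k))).

Definition l_u n m (M : 'M[R]_(n, m)) (PY : 'cV[R]_m) (w : 'I_n -> 'I_m)
  : 'rV[R]_n := \row_i ln ((invmx (Msub M w) *m M *m PY) i 0).
Definition b_u n m (M : 'M[R]_(n, m)) (PY : 'cV[R]_m) (w : 'I_n -> 'I_m) : R :=
  (l_u M PY w *m (invmx (Msub M w) *m M *m PY)) 0 0.
Definition a_u n k (M : 'M[R]_(n, n + k)) (PY : 'cV[R]_(n + k)) (P1 : 'M[R]_n)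
  (w : 'I_n -> 'I_(n + k)) : 'rV[R]_n :=
  l_u M PY w *m (invmx (Msub M w) *m lsubmx M *m invmx P1).

End Defs.

From HB Require Import structures.
From mathcomp Require Import all_boot all_order all_algebra.
From mathcomp Require Import reals exp.
From mathcomp Require Import ring lra.
Import Order.TTheory GRing.Theory Num.Theory.
Local Open Scope ring_scope.
Set Implicit Arguments. Unset Strict Implicit.

(** The columns of P_{X|Y} sum to one and P_{X|Y} = U Σ M, so the all-ones row
    lies in the row space of M; hence the M_Ω-coordinates of M y carry the same
    total mass as y.  Thus t = M_Ω^{-1} M P_Y sums to one and the perturbation
    direction s = M_Ω^{-1} M [P_{X|Y_1}^{-1} J; 0] sums to zero.  Since
    V* = t + ε s (spread over Ω) is nonnegative for all small ε > 0, t ≥ 0, and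
    membership in H_XY upgrades this to t > 0.  The Bregman bound
    0 ≤ y ln y - x ln x - (y - x)(ln x + 1) ≤ (y - x)²/x then gives
    H(t + ε s) = -Σ t ln t - ε Σ s ln t + O(ε²). *)

Lemma strictly_incr_inj n m (w : 'I_n -> 'I_m) : strictly_incr w -> injective w.
Proof.
move=> w_incr i j wij; apply: val_inj.
by case: (ltngtP i j) => // /w_incr; rewrite wij ltnn.
Qed.

Section Spread.
Variables (R : realType) (n m : nat) (w : 'I_n -> 'I_m).
Hypothesis w_inj : injective w.

Lemma spread_inj (c : 'cV[R]_n) i : spread w c (w i) 0 = c i 0.
Proof. by rewrite mxE (big_pred1 i) // => j /=; rewrite inj_eq. Qed.

Lemma big_spread (f : R -> R) (c : 'cV[R]_n) : f 0 = 0 ->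
  \sum_j f (spread w c j 0) = \sum_i f (c i 0).
Proof.
move=> f0; transitivity (\sum_j \sum_(i | w i == j) f (c i 0)).
  apply: eq_bigr => j _; case: (pickP (fun i => w i == j)) => [i /eqP <- | none].
    by rewrite spread_inj (big_pred1 i) // => l /=; rewrite inj_eq.
  by rewrite mxE !big_pred0.
rewrite (exchange_big_dep xpredT) //=; apply: eq_bigr => i _.
by rewrite (big_pred1 (w i)) // => j; rewrite eq_sym.
Qed.

Lemma entropy_spread (c : 'cV[R]_n) : entropy (spread w c) = entropy c.
Proof. by rewrite /entropy big_spread // /xlogx eqxx. Qed.

Lemma mulmx_spread p (M : 'M[R]_(p, m)) (c : 'cV[R]_n) :
  M *m spread w c = colsub w M *m c.
Proof.
apply/matrixP => i j; rewrite (ord1 j) !mxE.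
under eq_bigr => l _ do rewrite mxE mulr_sumr.
rewrite (exchange_big_dep xpredT) //=; apply: eq_bigr => l _.
by rewrite (big_pred1 (w l)) ?mxE // => x; rewrite eq_sym.
Qed.

End Spread.

Section RowSums.
Variable R : realType.

Lemma mulmx_ones_col p (z : 'cV[R]_p) :
  ((const_mx 1 : 'rV_p) *m z) 0 0 = \sum_i z i 0.
Proof. by rewrite mxE; apply: eq_bigr => i _; rewrite mxE mul1r. Qed.

Lemma mulmx_col_mx0 p n k (M : 'M[R]_(p, n + k)) (x : 'cV[R]_n) :
  M *m col_mx x 0 = lsubmx M *m x.
Proof. by rewrite -{1}[M]hsubmxK mul_row_col mulmx0 addr0. Qed.

Lemma ones_mul_condXY n m (PXY : 'M[R]_(n, m)) :
  (forall j, 0 < marginalY PXY j 0) ->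
  (const_mx 1 : 'rV_n) *m condXY PXY = const_mx 1.
Proof.
move=> PY_gt0; apply/matrixP => i j; have := PY_gt0 j; rewrite !mxE => PYj_gt0.
under eq_bigr => l _ do rewrite !mxE mul1r.
by rewrite -mulr_suml divff ?gt_eqF.
Qed.

Lemma svd_Mmat n k (A : 'M[R]_(n, n + k)) U S V : is_svd A U S V ->
  A = U *m diag_mx (\row_i S i (lshift k i)) *m Mmat V.
Proof.
case=> _ [_ [S_diag [_ ->]]]; rewrite -!mulmxA; congr (_ *m _).
apply/matrixP => i j; rewrite !mxE (bigD1 (lshift k i)) //= big1 ?addr0.
  rewrite (bigD1 i) //= big1 ?addr0; first by rewrite !mxE eqxx mulr1n.
  by move=> l /negbTE il; rewrite !mxE eq_sym il mulr0n mul0r.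
move=> l /eqP li; rewrite S_diag ?mul0r // => /= il; apply: li; exact: val_inj.
Qed.

Lemma ones_rowspace_Mmat n k (A : 'M[R]_(n, n + k)) U S V :
  is_svd A U S V -> (const_mx 1 : 'rV_n) *m A = const_mx 1 ->
  exists c : 'rV[R]_n, c *m Mmat V = const_mx 1.
Proof.
move=> /svd_Mmat A_eq ones_A.
exists (const_mx 1 *m U *m diag_mx (\row_i S i (lshift k i))).
by rewrite -ones_A A_eq !mulmxA.
Qed.

Lemma sum_coord_Msub n m (M : 'M[R]_(n, m)) (c : 'rV[R]_n) (w : 'I_n -> 'I_m)
    (y : 'cV[R]_m) :
  c *m M = const_mx 1 -> injective w -> Msub M w \in unitmx ->
  \sum_i (invmx (Msub M w) *m M *m y) i 0 = \sum_j y j 0.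
Proof.
move=> ones_M w_inj Mw_unit; set z := invmx _ *m M *m y.
rewrite -(big_spread w_inj (f := id) z) // -!mulmx_ones_col -ones_M -!mulmxA.
by rewrite mulmx_spread -/(Msub M w) /z -mulmxA mulKVmx.
Qed.

End RowSums.

Section EntropyExpansion.
Variable R : realType.

Lemma ge0_of_perturb (a b e0 : R) : 0 < e0 ->
  (forall eps, 0 < eps < e0 -> 0 <= a + eps * b) -> 0 <= a.
Proof.
move=> e0_gt0 perturb_ge0; apply/ler_addgt0Pr => e e_gt0.
set eps := Num.min (e0 / 2) (e / (`|b| + 1)).
have eps_gt0 : 0 < eps by rewrite lt_min !divr_gt0 // ltr_wpDl.
have eps_lt_e0 : eps < e0 by rewrite gt_min ltr_pdivrMr //; lra.
have eps_le : eps * (`|b| + 1) <= e.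
  by rewrite -ler_pdivlMr ?ltr_wpDl // ge_min lexx orbT.
have := perturb_ge0 eps; rewrite eps_gt0 eps_lt_e0 => /(_ isT).
have : eps * b <= eps * `|b| by rewrite ler_pM2l // ler_norm.
nra.
Qed.

Lemma xlogx_bregman (x y : R) : 0 < x -> 0 < y ->
  0 <= xlogx y - xlogx x - (y - x) * (ln x + 1) <= (y - x) ^+ 2 / x.
Proof.
move=> x_gt0 y_gt0; rewrite /xlogx !gt_eqF //.
have ln_le (z : R) : 0 < z -> ln z <= z - 1.
  by move=> z_gt0; have := @le_ln1Dx R (z - 1); rewrite subrKC; apply; lra.
have le_yx : y * (ln y - ln x) <= y * (y / x - 1).
  by rewrite ler_pM2l // -ln_div ?posrE // ln_le ?divr_gt0.
have le_xy : y * (ln x - ln y) <= y * (x / y - 1).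
  by rewrite ler_pM2l // -ln_div ?posrE // ln_le ?divr_gt0.
have e1 : y * (x / y - 1) = x - y by field; lra.
have e2 : y * (y / x - 1) - (y - x) = (y - x) ^+ 2 / x by field; lra.
apply/andP; split; lra.
Qed.

Lemma entropy_bregman n (t y : 'cV[R]_n) :
  (forall i, 0 < t i 0) -> (forall i, 0 < y i 0) ->
  0 <= entropy t - entropy y - \sum_i (y i 0 - t i 0) * (ln (t i 0) + 1)
    <= \sum_i (y i 0 - t i 0) ^+ 2 / t i 0.
Proof.
move=> t_gt0 y_gt0.
have -> : entropy t - entropy y - \sum_i (y i 0 - t i 0) * (ln (t i 0) + 1)
  = \sum_i (xlogx (y i 0) - xlogx (t i 0) - (y i 0 - t i 0) * (ln (t i 0) + 1)).
  by rewrite !sumrB /entropy; ring.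
apply/andP; split; [apply: sumr_ge0 | apply: ler_sum] => i _;
  by case/andP: (xlogx_bregman (t_gt0 i) (y_gt0 i)).
Qed.

Lemma perturb_gt0 n (t s : 'cV[R]_n) : (forall i, 0 < t i 0) ->
  exists2 delta, 0 < delta &
    forall eps, 0 < eps < delta -> forall i, 0 < t i 0 + eps * s i 0.
Proof.
move=> t_gt0; set K := \sum_i `|s i 0| / t i 0 + 1.
have ratio_ge0 i : 0 <= `|s i 0| / t i 0 by rewrite divr_ge0 // ltW.
have ratio_le i : `|s i 0| / t i 0 <= K - 1.
  by rewrite /K addrK (bigD1 i) //= lerDl sumr_ge0.
have K_gt0 : 0 < K by rewrite /K ltr_wpDl ?sumr_ge0.
exists K^-1; rewrite ?invr_gt0 // => eps /andP[eps_gt0 eps_lt] i.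
rewrite -div1r ltr_pdivlMr // in eps_lt.
have eps_ratio : eps * (`|s i 0| / t i 0) < 1.
  by apply: le_lt_trans eps_lt; rewrite ler_pM2l //; have := ratio_le i; lra.
rewrite mulrA ltr_pdivrMr // mul1r in eps_ratio.
have : eps * - `|s i 0| <= eps * s i 0 by rewrite ler_pM2l // lerNl -normrN ler_norm.
lra.
Qed.

Lemma entropy_first_order n (t s : 'cV[R]_n) :
  (forall i, 0 < t i 0) -> \sum_i s i 0 = 0 ->
  forall eta, 0 < eta -> exists2 delta, 0 < delta &
    forall eps, 0 < eps < delta ->
      `| entropy (t + eps *: s) - - ((\row_i ln (t i 0) *m t) 0 0
           + eps * (\row_i ln (t i 0) *m s) 0 0) | <= eta * eps.
Proof.
move=> t_gt0 sum_s eta eta_gt0; set l := \row_i ln (t i 0).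
have [delta delta_gt0 perturbed_gt0] := perturb_gt0 s t_gt0.
set C := \sum_i s i 0 ^+ 2 / t i 0.
have C_ge0 : 0 <= C by rewrite sumr_ge0 // => i _; rewrite divr_ge0 ?sqr_ge0 ?ltW.
exists (Num.min delta (eta / (C + 1))).
  by rewrite lt_min delta_gt0 divr_gt0 ?ltr_wpDl.
move=> eps /andP[eps_gt0]; rewrite lt_min => /andP[eps_lt_delta].
rewrite ltr_pdivlMr ?ltr_wpDl // => eps_small.
have y_gt0 i : 0 < (t + eps *: s) i 0.
  by rewrite !mxE perturbed_gt0 ?eps_gt0 ?eps_lt_delta.
have entropy_t : entropy t = - (l *m t) 0 0.
  rewrite /entropy mxE; congr (- _); apply: eq_bigr => i _.
  by rewrite /xlogx gt_eqF // mxE mulrC.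
have first_order : \sum_i ((t + eps *: s) i 0 - t i 0) * (ln (t i 0) + 1)
    = eps * (l *m s) 0 0.
  transitivity (\sum_i (eps * (l 0 i * s i 0) + eps * s i 0)).
    by apply: eq_bigr => i _; rewrite !mxE; ring.
  by rewrite big_split /= -!mulr_sumr sum_s mulr0 addr0 mxE.
have second_order : \sum_i ((t + eps *: s) i 0 - t i 0) ^+ 2 / t i 0 = eps ^+ 2 * C.
  by rewrite mulr_sumr; apply: eq_bigr => i _; rewrite !mxE; field; rewrite gt_eqF.
have := entropy_bregman t_gt0 y_gt0.
rewrite first_order second_order entropy_t => /andP[lo hi].
rewrite ler_norml; apply/andP; split; nra.
Qed.

End EntropyExpansion.

Theorem lemma4 (R : realType) (n k : nat) (hk : (0 < k)%N)
  (PXY : 'M[R]_(n, n + k))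
  (U : 'M[R]_n) (Sig : 'M[R]_(n, n + k)) (V : 'M[R]_(n + k))
  (w : 'I_n -> 'I_(n + k)) (J : 'cV[R]_n) :
  is_joint_pmf PXY ->
  (forall i, 0 < marginalX PXY i 0) ->
  (forall j, 0 < marginalY PXY j 0) ->
  \rank (condXY PXY) = n ->
  lsubmx (condXY PXY) \in unitmx ->
  is_svd (condXY PXY) U Sig V ->
  in_HXY (Mmat V) (marginalY PXY) ->
  strictly_incr w ->
  Msub (Mmat V) w \in unitmx ->
  \sum_(i < n) J i 0 = 0 ->
  \sum_(i < n) `|J i 0| <= 1 ->
  (exists2 e0 : R, 0 < e0 & forall eps : R, 0 < eps < e0 ->
     extreme_point
       (S_u (Mmat V) (marginalY PXY) (lsubmx (condXY PXY)) J eps)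
       (Vstar (Mmat V) (marginalY PXY) (lsubmx (condXY PXY)) J w eps)) ->
  forall eta : R, 0 < eta -> exists2 delta : R, 0 < delta &
    forall eps : R, 0 < eps < delta ->
      `| entropy (Vstar (Mmat V) (marginalY PXY) (lsubmx (condXY PXY)) J w eps)
         - - (b_u (Mmat V) (marginalY PXY) w
              + eps * (a_u (Mmat V) (marginalY PXY) (lsubmx (condXY PXY)) w *m J) 0 0) |
      <= eta * eps.
Proof.
move=> [_ sum_PXY] _ PY_gt0 _ P1_unit svdV HXY w_incr Mw_unit sum_J _ [e0 e0_gt0 extreme]
  eta eta_gt0.
have w_inj := strictly_incr_inj w_incr.
set M := Mmat V; set PY := marginalY PXY; set P1 := lsubmx (condXY PXY).
set t := invmx (Msub M w) *m M *m PY.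
set s := invmx (Msub M w) *m M *m col_mx (invmx P1 *m J) 0.
have ones_condXY := ones_mul_condXY PY_gt0.
have [c ones_M] := ones_rowspace_Mmat svdV ones_condXY.
have sum_t : \sum_i t i 0 = 1.
  rewrite (sum_coord_Msub _ ones_M w_inj Mw_unit).
  by under eq_bigr do rewrite mxE; rewrite exchange_big.
have sum_s : \sum_i s i 0 = 0.
  rewrite (sum_coord_Msub _ ones_M w_inj Mw_unit) big_split_ord /=.
  under eq_bigr do rewrite col_mxEu.
  under [X in _ + X]eq_bigr do rewrite col_mxEd mxE.
  have ones_P1 : (const_mx 1 : 'rV_n) *m P1 = const_mx 1.
    by rewrite mulmx_lsub ones_condXY lsubmx_const.
  by rewrite big1_eq addr0 -mulmx_ones_col mulmxA -{1}ones_P1 mulmxK // mulmx_ones_col.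
have t_ge0 i : 0 <= t i 0.
  apply: (ge0_of_perturb (b := s i 0) e0_gt0) => eps /extreme [[_ Vstar_ge0] _].
  by have := Vstar_ge0 (w i); rewrite spread_inj // !mxE.
have t_gt0 := HXY w w_incr Mw_unit (conj t_ge0 sum_t).
have a_uJ : a_u M PY P1 w *m J = l_u M PY w *m s.
  by rewrite /s -mulmxA mulmx_col_mx0 /a_u !mulmxA.
have [delta delta_gt0 expansion] := entropy_first_order t_gt0 sum_s eta_gt0.
exists delta => // eps eps_range.
by rewrite entropy_spread // a_uJ; apply: expansion.
Qed.
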